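(* Let $L$ be an $n$-dimensional nilpotent Lie algebra. If $\dim\mathcal{M}^{(2)}(L)=\frac13 n(n-1)(n+1)$, then $L\cong A(n)$.
   Context: All Lie algebras are over a fixed field. For a Lie algebra $L$ with free presentation $L\cong F/R$, the $2$-nilpotent multiplier is $\mathcal{M}^{(2)}(L)=(R\cap F^{3})/[[R,F],F]$, where $F^3=[[F,F],F]$. $A(n)$ denotes the abelian Lie algebra of dimension $n$. *)

From HB Require Import structures.
From mathcomp Require Import all_boot all_order all_algebra.
Set Implicit Arguments. Unset Strict Implicit. Unset Printing Implicit Defensive.
Import GRing.Theory.
Local Open Scope ring_scope.

Section Lie.
Variable K : fieldType.

Definition is_lie (V : lmodType K) (br : V -> V -> V) : Prop :=
  [/\ (forall (a : K) (x y z : V), br (a *: x + y) z = a *: br x z + br y z),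
      (forall (a : K) (x y z : V), br x (a *: y + z) = a *: br x y + br x z),
      (forall x : V, br x x = 0) &
      (forall x y z : V, br x (br y z) + br y (br z x) + br z (br x y) = 0)].

Definition lie_hom (V W : lmodType K) (brV : V -> V -> V) (brW : W -> W -> W)
  (f : V -> W) : Prop :=
  (forall (a : K) (x y : V), f (a *: x + y) = a *: f x + f y) /\
  (forall x y : V, f (brV x y) = brW (f x) (f y)).

Inductive brspan (V : lmodType K) (br : V -> V -> V) (A B : V -> Prop) : V -> Prop :=
  | brspan0 : brspan br A B 0
  | brspan_br x y : A x -> B y -> brspan br A B (br x y)
  | brspan_add u v : brspan br A B u -> brspan br A B v -> brspan br A B (u + v)
  | brspan_scale (a : K) u : brspan br A B u -> brspan br A B (a *: u).

(* lower central series: lcs br k = V^(k+1); lcs 0 = V, lcs (k+1) = [lcs k, V] *)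
Fixpoint lcs (V : lmodType K) (br : V -> V -> V) (k : nat) : V -> Prop :=
  match k with
  | O => fun _ => True
  | S k' => brspan br (lcs br k') (fun _ => True)
  end.

Definition nilpotent_lie (V : lmodType K) (br : V -> V -> V) : Prop :=
  exists c : nat, forall x : V, lcs br c x -> x = 0.

Definition is_free_lie (X : Type) (F : lmodType K) (brF : F -> F -> F)
  (i : X -> F) : Prop :=
  forall (M : lmodType K) (brM : M -> M -> M), is_lie brM ->
  forall f : X -> M,
    exists g : F -> M,
      [/\ lie_hom brF brM g, (forall x, g (i x) = f x) &
          (forall g' : F -> M, lie_hom brF brM g' -> (forall x, g' (i x) = f x) ->
             forall v, g' v = g v)].

Definition quot_dim (V : lmodType K) (A B : V -> Prop) (d : nat) : Prop :=
  exists e : 'I_d -> V,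
    [/\ (forall j, A (e j)),
        (forall v, A v -> exists c : 'I_d -> K, B (v - \sum_(j < d) c j *: e j)) &
        (forall c : 'I_d -> K, B (\sum_(j < d) c j *: e j) -> forall j, c j = 0)].

(* For a free presentation pi : F -> L with R = ker pi:
   numerator R cap F^3 and denominator [[R,F],F] of M^(2)(L). *)
Definition M2_num (F L : lmodType K) (brF : F -> F -> F) (pi : F -> L) : F -> Prop :=
  fun v => pi v = 0 /\ lcs brF 2 v.
Definition M2_den (F L : lmodType K) (brF : F -> F -> F) (pi : F -> L) : F -> Prop :=
  brspan brF (brspan brF (fun v => pi v = 0) (fun _ => True)) (fun _ => True).

Definition two_nilpotent_multiplier_dim (F L : lmodType K) (brF : F -> F -> F)
  (pi : F -> L) (d : nat) : Prop :=
  quot_dim (M2_num brF pi) (M2_den brF pi) d.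

Definition abelian_br (n : nat) : 'rV[K]_n -> 'rV[K]_n -> 'rV[K]_n := fun _ _ => 0.

Definition lie_iso (V W : lmodType K) (brV : V -> V -> V) (brW : W -> W -> W) : Prop :=
  exists f : V -> W, lie_hom brV brW f /\ bijective f.
End Lie.

(* The brackets [[x_a, x_b], x_c] of lifts x_1, ..., x_n of a basis of L, taken over the
   n(n-1)(n+1)/3 Hall triples a < b, a <= c, span F^3 modulo [[R,F],F] (by bilinearity,
   antisymmetry and Jacobi, and because brackets involving R lie in [[R,F],F]).  Hence a
   multiplier of that dimension fills all of F^3 / [[R,F],F].  If L^3 <> 0, an element of
   F^3 outside R is independent of the multiplier modulo [[R,F],F]: one vector too many.  If
   L^3 = 0 but [a, c] <> 0, choose the basis so that x_p = [a', c'] lifts [a, c]; then a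
   Hall bracket such as [[x_i, x_p], x_p] lies in [[R,F],F], since [x_i, x_p] is in R and
   x_p is a bracket, so fewer vectors suffice, again a contradiction.  So L is abelian. *)

From HB Require Import structures.
From mathcomp Require Import all_boot all_order all_algebra zify.
Set Implicit Arguments. Unset Strict Implicit. Unset Printing Implicit Defensive.
Import GRing.Theory.
Local Open Scope ring_scope.

Definition spanning (K : fieldType) (V : lmodType K) n (y : 'I_n -> V) : Prop :=
  forall v, exists c : 'I_n -> K, v = \sum_i c i *: y i.

Section LieAlgebra.
Variables (K : fieldType) (V : lmodType K) (br : V -> V -> V).
Hypothesis lieV : is_lie br.

Lemma brLl a x y z : br (a *: x + y) z = a *: br x z + br y z.
Proof. by case: lieV. Qed.

Lemma brLr a x y z : br z (a *: x + y) = a *: br z x + br z y.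
Proof. by case: lieV. Qed.

Lemma brxx x : br x x = 0.
Proof. by case: lieV. Qed.

Lemma br0l z : br 0 z = 0.
Proof. by have := brLl (-1) z z z; rewrite !scaleN1r !addNr. Qed.

Lemma br0r z : br z 0 = 0.
Proof. by have := brLr (-1) z z z; rewrite !scaleN1r !addNr. Qed.

Lemma brDl x y z : br (x + y) z = br x z + br y z.
Proof. by have := brLl 1 x y z; rewrite !scale1r. Qed.

Lemma brDr x y z : br z (x + y) = br z x + br z y.
Proof. by have := brLr 1 x y z; rewrite !scale1r. Qed.

Lemma brZl a x z : br (a *: x) z = a *: br x z.
Proof. by have := brLl a x 0 z; rewrite addr0 br0l addr0. Qed.

Lemma brZr a x z : br z (a *: x) = a *: br z x.
Proof. by have := brLr a x 0 z; rewrite addr0 br0r addr0. Qed.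

Lemma brNl x z : br (- x) z = - br x z.
Proof. by rewrite -scaleN1r brZl scaleN1r. Qed.

Lemma br_anti x y : br x y = - br y x.
Proof.
apply/eqP; rewrite -addr_eq0; apply/eqP.
by have := brxx (x + y); rewrite brDl !brDr !brxx add0r addr0.
Qed.

Lemma br_jacobi x y z : br (br x y) z = br (br z y) x - br (br z x) y.
Proof.
case: lieV => _ _ _ /(_ x y z).
rewrite (br_anti x (br y z)) (br_anti y (br z x)) (br_anti z (br x y)) (br_anti y z).
by rewrite brNl opprK => /eqP; rewrite subr_eq0 => /eqP.
Qed.

Lemma br_eq0_spanning_le1 n (y : 'I_n -> V) :
  (n <= 1)%N -> spanning y -> forall a b, br a b = 0.
Proof.
case: n y => [|[|//]] y _ hy a b; have [ca ->] := hy a; have [cb ->] := hy b.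
  by rewrite big_ord0 br0l.
by rewrite !big_ord1 brZl brZr brxx !scaler0.
Qed.

Lemma brspanL (A B : V -> Prop) a u v :
  brspan br A B u -> brspan br A B v -> brspan br A B (a *: u + v).
Proof. by move=> hu hv; apply: brspan_add => //; apply: brspan_scale. Qed.

End LieAlgebra.

Lemma lincomb_closed (K : fieldType) (V : lmodType K) (D : V -> Prop) :
  D 0 -> (forall a u v, D u -> D v -> D (a *: u + v)) ->
  forall m (c : 'I_m -> K) (u : 'I_m -> V), (forall j, D (u j)) -> D (\sum_j c j *: u j).
Proof.
move=> D0 DL m c u hu; apply: (big_ind D D0) => [v w hv hw|j _].
  by have := DL 1 _ _ hv hw; rewrite scale1r.
by have := DL (c j) _ _ (hu j) D0; rewrite addr0.
Qed.

Section SpanModulo.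
Variables (K : fieldType) (V : lmodType K) (D : V -> Prop).

Definition span_mod p (s : 'I_p -> V) (v : V) : Prop :=
  exists a : 'I_p -> K, D (v - \sum_k a k *: s k).

Definition free_mod m (e : 'I_m -> V) : Prop :=
  forall c : 'I_m -> K, D (\sum_j c j *: e j) -> forall j, c j = 0.

Lemma span_mod_ind p (s : 'I_p -> V) (Q : V -> Prop) :
  Q 0 -> (forall a u v, Q u -> Q v -> Q (a *: u + v)) ->
  (forall r, D r -> Q r) -> (forall k, Q (s k)) -> forall v, span_mod s v -> Q v.
Proof.
move=> Q0 QL QD Qs v [a hv].
have := QL 1 _ _ (QD _ hv) (lincomb_closed Q0 QL a Qs).
by rewrite scale1r subrK.
Qed.

Section Closed.
Hypotheses (D0 : D 0) (DL : forall a u v, D u -> D v -> D (a *: u + v)).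

Variables (p : nat) (s : 'I_p -> V).

Lemma span_modL a u v : span_mod s u -> span_mod s v -> span_mod s (a *: u + v).
Proof.
move=> [au hu] [av hv]; exists (fun k => a * au k + av k).
have -> : \sum_k (a * au k + av k) *: s k =
    a *: (\sum_k au k *: s k) + \sum_k av k *: s k.
  by rewrite scaler_sumr -big_split; apply: eq_bigr => k _; rewrite scalerDl scalerA.
by rewrite opprD addrACA -scalerBr; apply: DL.
Qed.

Lemma span_mod_sub v : D v -> span_mod s v.
Proof. by exists (fun _ => 0); rewrite big1 ?subr0 // => k _; rewrite scale0r. Qed.

Lemma span_mod0 : span_mod s 0.
Proof. exact: span_mod_sub. Qed.

Lemma span_modD u v : span_mod s u -> span_mod s v -> span_mod s (u + v).
Proof. by move=> hu /(span_modL 1 hu); rewrite scale1r. Qed.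

Lemma span_modZ a u : span_mod s u -> span_mod s (a *: u).
Proof. by move=> /(span_modL a)/(_ span_mod0); rewrite addr0. Qed.

Lemma span_modB u v : span_mod s u -> span_mod s v -> span_mod s (u - v).
Proof. by move=> hu hv; apply: span_modD => //; rewrite -scaleN1r; apply: span_modZ. Qed.

Lemma span_mod_gen k : span_mod s (s k).
Proof.
exists (fun k' => (k' == k)%:R).
rewrite (bigD1 k) //= eqxx scale1r big1 ?addr0 ?subrr // => k' /negbTE ->.
exact: scale0r.
Qed.

(* A nonzero left kernel vector [u] of the coefficient matrix of [e] over [s] gives the
   relation [\sum_j u_j e_j = 0] modulo [D]. *)
Lemma free_mod_leq m (e : 'I_m -> V) :
  (forall j, span_mod s (e j)) -> free_mod e -> (m <= p)%N.
Proof.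
move=> he hfree; rewrite leqNgt; apply/negP => ltpm.
have [a ha] := fin_all_exists he.
pose A : 'M[K]_(m, p) := \matrix_(j, k) a j k.
have /rowV0Pn[u /sub_kermxP uA0 u_neq0] : kermx A != 0.
  rewrite -mxrank_eq0 mxrank_ker subn_eq0 -ltnNge.
  exact: leq_ltn_trans (rank_leq_col A) ltpm.
have sum_uS : \sum_j u 0 j *: \sum_k a j k *: s k = 0.
  under eq_bigr => j _ do rewrite scaler_sumr.
  rewrite exchange_big /=; apply: big1 => k _.
  under eq_bigr => j _ do rewrite scalerA.
  rewrite -scaler_suml.
  have -> : \sum_j u 0 j * a j k = (u *m A) 0 k.
    by rewrite mxE; apply: eq_bigr => j _; rewrite mxE.
  by rewrite uA0 mxE scale0r.
have Du : D (\sum_j u 0 j *: e j).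
  rewrite -[X in D X]subr0 -[X in _ - X]sum_uS -sumrB.
  under eq_bigr => j _ do rewrite -scalerBr.
  exact: (lincomb_closed D0 DL _ ha).
by case/eqP: u_neq0; apply/rowP => j; rewrite mxE (hfree _ Du).
Qed.

End Closed.
End SpanModulo.

Lemma spanning_exchange (K : fieldType) (V : lmodType K) n (y : 'I_n -> V) b :
  spanning y -> b != 0 -> exists2 y' : 'I_n -> V, spanning y' & exists p, y' p = b.
Proof.
move=> y_span b_neq0; have [be hbe] := y_span b.
have [p be_p] : exists p, be p != 0.
  apply/existsP; rewrite -negb_forall; apply: contra b_neq0 => /forallP be0.
  by rewrite hbe big1 // => i _; rewrite (eqP (be0 i)) scale0r.
exists (fun i => if i == p then b else y i); last by exists p; rewrite eqxx.
move=> v; have [c hc] := y_span v; pose k := c p / be p.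
exists (fun i => if i == p then k else c i - k * be i).
rewrite (bigD1 p) //= eqxx; under eq_bigr => i /negbTE ip do rewrite ip.
have -> : \sum_(i < n | i != p) (c i - k * be i) *: y i =
    \sum_(i < n | i != p) c i *: y i - k *: \sum_(i < n | i != p) be i *: y i.
  by rewrite scaler_sumr -sumrB; apply: eq_bigr => i _; rewrite scalerBl scalerA.
rewrite hc hbe !(bigD1 p (P := xpredT)) //= scalerDr scalerA divfK //.
by rewrite addrACA subrr addr0.
Qed.

Definition hall_triple n (t : 'I_n * 'I_n * 'I_n) : bool :=
  (t.1.1 < t.1.2)%N && (t.1.1 <= t.2)%N.

Section HallCount.
Local Open Scope nat_scope.

Lemma sum_ord_geq n i : \sum_(k < n) (i <= k : nat) = n - i.
Proof.
rewrite -(big_mkord xpredT (fun k => (i <= k : nat))).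
elim: n => [|n IH]; first by rewrite big_geq.
by rewrite big_nat_recr //= IH; case: leqP => h; lia.
Qed.

Lemma sum_consecutive_prod n :
  3 * \sum_(i < n) (n - i.+1) * (n - i) = n * (n - 1) * (n + 1).
Proof.
elim: n => [|n IH]; first by rewrite big_ord0.
rewrite big_ord_recl /=.
under eq_bigr => i _ do rewrite /bump add1n !subSS.
rewrite mulnDr IH; nia.
Qed.

Lemma card_hall_triple n : #|@hall_triple n| = n * (n - 1) * (n + 1) %/ 3.
Proof.
rewrite -sum_consecutive_prod mulKn // -sum1_card big_mkcond /=.
rewrite -(pair_big xpredT xpredT (fun ij k => if hall_triple (ij, k) then 1 else 0)) /=.
rewrite -(pair_big xpredT xpredT
  (fun i j => \sum_k if hall_triple (i, j, k) then 1 else 0)) /=.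
apply: eq_bigr => i _.
transitivity (\sum_(j < n) (i < j : nat) * \sum_(k < n) (i <= k : nat)).
  apply: eq_bigr => j _; rewrite big_distrr; apply: eq_bigr => k _.
  by rewrite /hall_triple /=; case: (i < j); case: (i <= k).
by rewrite -big_distrl /= !sum_ord_geq.
Qed.

End HallCount.

Section FreePresentation.
Variables (K : fieldType) (F L : lmodType K) (brF : F -> F -> F) (brL : L -> L -> L).
Variable pi : F -> L.
Hypotheses (lieF : is_lie brF) (lieL : is_lie brL) (hpi : lie_hom brF brL pi).

HB.instance Definition _ := GRing.isLinear.Build K F L *:%R pi (proj1 hpi).

Local Notation R := (fun v => pi v = 0).
Local Notation D := (M2_den brF pi).

Lemma pi_br u v : pi (brF u v) = brL (pi u) (pi v).
Proof. by case: hpi. Qed.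

Lemma M2_den0 : D 0.
Proof. exact: brspan0. Qed.

Lemma M2_denL a u v : D u -> D v -> D (a *: u + v).
Proof. exact: brspanL. Qed.

Lemma brspan_ker (A B : F -> Prop) v :
  (forall a, A a -> pi a = 0) -> brspan brF A B v -> pi v = 0.
Proof.
move=> hA; elim=> [|x y /hA hx _|u w _ hu _ hw|a u _ hu]; first exact: linear0.
- by rewrite pi_br hx (br0l lieL).
- by rewrite linearD /= hu hw addr0.
- by rewrite linearZ /= hu scaler0.
Qed.

Lemma M2_den_ker v : D v -> pi v = 0.
Proof. by apply: brspan_ker => u; apply: brspan_ker. Qed.

Lemma M2_den_br_l r f g : pi r = 0 -> D (brF (brF r f) g).
Proof. by move=> hr; apply: brspan_br => //; apply: brspan_br. Qed.

Lemma M2_den_br_m r f g : pi r = 0 -> D (brF (brF f r) g).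
Proof.
move=> hr; apply: brspan_br => //; rewrite (br_anti lieF) -scaleN1r.
by apply: brspan_scale; apply: brspan_br.
Qed.

Lemma M2_den_br_r r f g : pi r = 0 -> D (brF (brF f g) r).
Proof.
move=> hr; rewrite (br_jacobi lieF) addrC -scaleN1r.
by apply: M2_denL; apply: M2_den_br_l.
Qed.

Lemma M2_den_br_br r f g : pi r = 0 -> D (brF r (brF f g)).
Proof.
move=> /(M2_den_br_r f g) hr; rewrite (br_anti lieF) -scaleN1r -[X in D X]addr0.
exact: M2_denL hr M2_den0.
Qed.

Lemma lift_span_mod_ker n (x : 'I_n -> F) (y : 'I_n -> L) :
  (forall i, pi (x i) = y i) -> spanning y -> forall f, span_mod R x f.
Proof.
move=> hxy hy f; have [c hc] := hy (pi f); exists c.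
rewrite linearB /= hc linear_sum; apply/eqP; rewrite subr_eq0; apply/eqP/eq_bigr => i _.
by rewrite linearZ /= hxy.
Qed.

Section HallSpan.
Variables (n : nat) (x : 'I_n -> F).
Hypothesis x_span : forall f, span_mod R x f.

Let x_ind (Q : F -> Prop) Q0 QL QR Qx f := span_mod_ind (Q := Q) Q0 QL QR Qx (x_span f).

Definition bracket3 (t : 'I_n * 'I_n * 'I_n) := brF (brF (x t.1.1) (x t.1.2)) (x t.2).

Section HallFamily.
Variable P : pred ('I_n * 'I_n * 'I_n).
Hypothesis outside_P_den : forall t, hall_triple t -> ~~ P t -> D (bracket3 t).

Definition hall_family (k : 'I_#|P|) := bracket3 (enum_val k).

Local Notation Sp := (span_mod D hall_family).
Let Sp0 := span_mod0 M2_den0 hall_family.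
Let Sp_sub := span_mod_sub (D := D) hall_family.
Let SpL := span_modL M2_denL (s := hall_family).
Let SpD := span_modD M2_denL (s := hall_family).
Let SpZ := span_modZ M2_den0 M2_denL (s := hall_family).
Let SpB := span_modB M2_den0 M2_denL (s := hall_family).

Lemma span_hall_bracket3 t : hall_triple t -> Sp (bracket3 t).
Proof.
move=> ht; case Pt: (P t); last exact: Sp_sub (outside_P_den ht (negbT Pt)).
have tP : t \in P by [].
have := span_mod_gen M2_den0 hall_family (enum_rank_in tP t).
by rewrite /hall_family enum_rankK_in.
Qed.

(* Every triple reduces to Hall triples: order the first two entries by antisymmetry, then
   move a smaller third entry to the front by Jacobi. *)
Lemma span_bracket3 t : Sp (bracket3 t).
Proof.
have ordered (a b c : 'I_n) : (a < b)%N -> Sp (bracket3 (a, b, c)).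
  move=> ab; case: (leqP a c) => ac.
    by apply: span_hall_bracket3; rewrite /hall_triple /= ab ac.
  have cb := ltn_trans ac ab.
  rewrite /bracket3 (br_jacobi lieF) /=; apply: SpB.
    by apply: (span_hall_bracket3 (t := (c, b, a))); rewrite /hall_triple /= cb ltnW.
  by apply: (span_hall_bracket3 (t := (c, a, b))); rewrite /hall_triple /= ac ltnW.
case: t => [[a b] c]; case: (ltngtP a b) => [ab|ba|/ord_inj ->]; first exact: ordered.
  rewrite /bracket3 /= (br_anti lieF (x a)) (brNl lieF) -scaleN1r.
  exact: SpZ (ordered _ _ _ ba).
by rewrite /bracket3 /= (brxx lieF) (br0l lieF).
Qed.

Lemma span_br3 f g h : Sp (brF (brF f g) h).
Proof.
move: f g h; apply: x_ind => [g h|a u v hu hv g h|r hr g h|i].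
- by rewrite !(br0l lieF).
- by rewrite !(brLl lieF); apply: SpL.
- by apply: Sp_sub; apply: M2_den_br_l.
move=> g h; move: g; apply: x_ind => [|a u v hu hv|r hr|j].
- by rewrite (br0r lieF) (br0l lieF).
- by rewrite (brLr lieF) (brLl lieF); apply: SpL.
- by apply: Sp_sub; apply: M2_den_br_m.
move: h; apply: x_ind => [|a u v hu hv|r hr|k].
- by rewrite (br0r lieF).
- by rewrite (brLr lieF); apply: SpL.
- by apply: Sp_sub; apply: M2_den_br_r.
exact: (span_bracket3 (i, j, k)).
Qed.

Lemma span_lcs2 v : lcs brF 2 v -> Sp v.
Proof.
elim=> [|u h hu _|u w _ hu _ hw|a u _ hu]; last 2 first.
- exact: SpD.
- exact: SpZ.
- exact: Sp0.
elim: hu h => [|f g _ _|u1 u2 _ h1 _ h2|a u1 _ h1] h.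
- by rewrite (br0l lieF).
- exact: span_br3.
- by rewrite (brDl lieF); apply: SpD.
- by rewrite (brZl lieF); apply: SpZ.
Qed.

End HallFamily.

Hypothesis M2_dim : two_nilpotent_multiplier_dim brF pi #|@hall_triple n|.

Lemma M2_dim_hall_lcs2_ker w : lcs brF 2 w -> pi w = 0.
Proof.
move=> w3; apply/eqP/negPn/negP => w_notR.
case: M2_dim => e [eM _ e_free]; set N := #|_| in e eM e_free.
pose v (j : 'I_N.+1) := if unlift ord_max j is Some k then e k else w.
have v_lcs2 j : lcs brF 2 (v j) by rewrite /v; case: unliftP => [k _|_]; [exact: (eM k).2|].
have v_free : free_mod D v.
  have widen_lift k : widen_ord (leqnSn N) k = lift ord_max k.
    exact/val_inj/esym/lift_max.
  move=> c; rewrite big_ord_recr /= /v unlift_none.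
  under eq_bigr => k _ do rewrite widen_lift liftK.
  move=> Dc; have c_max : c ord_max = 0.
    move/M2_den_ker: Dc; rewrite linearD linear_sum big1 ?add0r => [|k _]; last first.
      by rewrite linearZ /= (eM k).1 scaler0.
    by rewrite linearZ => /eqP; rewrite scaler_eq0 (negbTE w_notR) orbF => /eqP.
  move: Dc; rewrite c_max scale0r addr0 => /e_free c_lift j.
  by case: (unliftP ord_max j) => [k ->|->].
have no_exception t : hall_triple t -> ~~ hall_triple t -> D (bracket3 t) by move=> ->.
have := free_mod_leq M2_den0 M2_denL (fun j => span_lcs2 no_exception (v_lcs2 j)) v_free.
by rewrite ltnn.
Qed.

Lemma M2_dim_hall_dim_le1 p a c :
  x p = brF a c -> (forall u v w : L, brL (brL u v) w = 0) -> (n <= 1)%N.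
Proof.
move=> xp L3_0; rewrite leqNgt; apply/negP => n_gt1.
case: M2_dim => e [eM _ e_free].
pose sp (t : 'I_n * 'I_n * 'I_n) := (p \in [:: t.1.1; t.1.2]) && (t.2 == p).
pose P := [pred t | hall_triple t && ~~ sp t].
have outside_P_den t : hall_triple t -> ~~ P t -> D (bracket3 t).
  rewrite /P inE => -> /negPn /andP [p_in /eqP t2p].
  rewrite /bracket3 t2p xp; apply: M2_den_br_br; rewrite /= pi_br.
  move: p_in; rewrite !inE => /orP [] /eqP <-; rewrite xp pi_br ?L3_0 //.
  by rewrite (br_anti lieL) L3_0 oppr0.
have P_lt : (#|P| < #|@hall_triple n|)%N.
  apply: proper_card; apply/properP; split.
    by apply/subsetP => t; rewrite !inE => /andP [].
  have n_gt0 : (0 < n)%N := ltnW n_gt1.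
  pose i0 : 'I_n := Ordinal n_gt0; pose i1 : 'I_n := Ordinal n_gt1.
  have [p0|p_neq0] := eqVneq (p : nat) 0.
    by exists (p, i1, p); rewrite unfold_in ?inE /hall_triple /sp /= ?p0 ?eqxx ?mem_head.
  by exists (i0, p, p); rewrite unfold_in /hall_triple /sp /= ?inE ?lt0n ?p_neq0 ?eqxx ?orbT.
have := free_mod_leq M2_den0 M2_denL (fun j => span_lcs2 outside_P_den (eM j).2) e_free.
by rewrite leqNgt P_lt.
Qed.

End HallSpan.

Section MaximalMultiplier.
Variables (n : nat) (y : 'I_n -> L).
Hypotheses (y_span : spanning y)
           (pi_surj : forall v, exists f, pi f = v)
           (M2_dim : two_nilpotent_multiplier_dim brF pi #|@hall_triple n|).

Lemma M2_dim_hall_lcs2_eq0 u v w : brL (brL u v) w = 0.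
Proof.
have [x x_lift] := fin_all_exists (fun i => pi_surj (y i)).
have [u' <-] := pi_surj u; have [v' <-] := pi_surj v; have [w' <-] := pi_surj w.
rewrite -!pi_br; apply: (M2_dim_hall_lcs2_ker (lift_span_mod_ker x_lift y_span) M2_dim).
by apply: brspan_br => //; apply: brspan_br.
Qed.

Lemma M2_dim_hall_abelian a c : brL a c = 0.
Proof.
have [//|b_neq0] := eqVneq (brL a c) 0.
have [y' y'_span [p y'p]] := spanning_exchange y_span b_neq0.
have [a' a'_lift] := pi_surj a; have [c' c'_lift] := pi_surj c.
have [x1 x1_lift] := fin_all_exists (fun i => pi_surj (y' i)).
pose x i := if i == p then brF a' c' else x1 i.
have x_lift i : pi (x i) = y' i.
  rewrite /x; have [->|_] := eqVneq i p; last exact: x1_lift.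
  by rewrite pi_br a'_lift c'_lift y'p.
apply: (br_eq0_spanning_le1 lieL _ y'_span).
have xp : x p = brF a' c' by rewrite /x eqxx.
exact: (M2_dim_hall_dim_le1 (lift_span_mod_ker x_lift y'_span) M2_dim xp M2_dim_hall_lcs2_eq0).
Qed.

End MaximalMultiplier.
End FreePresentation.

Lemma vbasis_spanning (K : fieldType) (L : vectType K) :
  spanning (fun j : 'I_(\dim (fullv : {vspace L})) => (vbasis fullv)`_j : L).
Proof. by move=> v; exists (coord (vbasis fullv) ^~ v); exact: coord_vbasis (memvf v). Qed.

Lemma abelian_lie_iso (K : fieldType) (L : vectType K) (brL : L -> L -> L) :
  (forall a b, brL a b = 0) -> lie_iso brL (@abelian_br K (\dim (fullv : {vspace L}))).
Proof.
move=> br0; have e_basis := vbasisP (fullv : {vspace L}).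
exists (passmx.rVof (vbasis fullv)); split.
  split=> [a u v|u v]; first exact: passmx.rVof_linear.
  by rewrite br0 /abelian_br; apply/rowP => k; rewrite !mxE linear0.
exists (passmx.vecof (vbasis fullv)); first exact: passmx.rVofK e_basis.
exact: passmx.vecofK e_basis.
Qed.

Theorem corollary2p15 (K : fieldType) (n : nat) (L : vectType K)
  (brL : L -> L -> L)
  (X : Type) (F : lmodType K) (brF : F -> F -> F) (i : X -> F) (pi : F -> L) :
  is_lie brL -> \dim (fullv : {vspace L}) = n -> nilpotent_lie brL ->
  is_lie brF -> is_free_lie brF i -> lie_hom brF brL pi -> (forall y : L, exists x : F, pi x = y) ->
  two_nilpotent_multiplier_dim brF pi ((n * (n - 1) * (n + 1)) %/ 3)%N ->
  lie_iso brL (@abelian_br K n).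
Proof.
move=> lieL <- _ lieF _ hpi pi_surj M2_dim.
rewrite -card_hall_triple in M2_dim.
apply: abelian_lie_iso.
exact: (M2_dim_hall_abelian lieF lieL hpi (@vbasis_spanning _ L) pi_surj M2_dim).
Qed.
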